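(* Let $A$ be a finite simple undirected graph, let $v\neq w$ be vertices of $A$, and let $d(v),d(w)$ denote the degrees of $v$ and $w$ in $A$. (i) If $\{v,w\}\notin E(A)$ and $A'$ is obtained from $A$ by inserting the edge $\{v,w\}$, then $|E(W(A'))\setminus E(W(A))|\le d(v)+d(w)$ and $|E(W(A))\setminus E(W(A'))|\le \min(d(v),d(w))$. (ii) If $\{v,w\}\in E(A)$ and $A'$ is obtained from $A$ by removing the edge $\{v,w\}$, then $|E(W(A'))\setminus E(W(A))|\le \min(d(v),d(w))$ and $|E(W(A))\setminus E(W(A'))|\le d(v)+d(w)$.
   Context: A wedge in a graph $G=(V,E)$ is a triple of nodes $u,v,w$ with $\{u,v\},\{v,w\}\in E$ and $\{u,w\}\notin E$, denoted $(v,\{u,w\})$. The wedge graph $W(G)$ has one vertex $n_{uv}$ for each edge $\{u,v\}\in E$, and an edge $\{n_{uv},n_{vw}\}$ for each wedge $(v,\{u,w\})$ of $G$. Edges of wedge graphs are compared via these names, i.e. $n_{uv}$ denotes the same vertex in $W(A)$ and $W(A')$ whenever $\{u,v\}$ is an edge of both graphs. *)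

From mathcomp Require Import all_boot.
Set Implicit Arguments. Unset Strict Implicit. Unset Printing Implicit Defensive.

Definition simple_graph (T : finType) (e : rel T) : Prop :=
  symmetric e /\ irreflexive e.

Definition deg (T : finType) (e : rel T) (v : T) : nat := #|[set u | e v u]|.

Definition edges (T : finType) (e : rel T) : {set {set T}} :=
  [set E : {set T} | [exists u, exists v, e u v && (E == [set u; v])]].

(* E(W(G)): for each wedge (v,{u,w}) (u,v,w distinct, {u,v},{v,w} in E,
   {u,w} not in E) the edge {n_uv, n_vw}, where vertices of W(G) are named
   by the edges of G. *)
Definition wedge_edges (T : finType) (e : rel T) : {set {set {set T}}} :=
  [set P : {set {set T}} | [exists u, exists v, exists w,
     [&& e u v, e v w, ~~ e u w, u != w &
         P == [set [set u; v]; [set v; w]]]]].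

Definition add_edge (T : finType) (e : rel T) (a b : T) : rel T :=
  fun x y => e x y || ((x == a) && (y == b)) || ((x == b) && (y == a)).

Definition del_edge (T : finType) (e : rel T) (a b : T) : rel T :=
  fun x y => e x y && ~~ (((x == a) && (y == b)) || ((x == b) && (y == a))).

(* A wedge (c, {u, x}) that appears or disappears when the edge {v, w} is
   toggled must involve the pair {v, w}.  Either {v, w} is one of its two
   edges, and then its W-edge is {n_vw, n_vx} for a neighbour x of v or
   {n_vw, n_wx} for a neighbour x of w; or {v, w} is its missing edge, and
   then its W-edge is {n_vc, n_cw} for a common neighbour c of v and w.
   Inserting the edge only creates wedges of the first kind and destroys
   wedges of the second kind.  Removing {v, w} from A undoes inserting it
   into A - {v, w}, whose degrees are at most those of A, so (ii) follows
   from (i). *)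
From mathcomp Require Import all_boot.

Set Implicit Arguments.
Unset Strict Implicit.
Unset Printing Implicit Defensive.

Definition wedge_edge (T : finType) (u c x : T) : {set {set T}} :=
  [set [set u; c]; [set c; x]].

Lemma wedge_edgeC (T : finType) (u c x : T) : wedge_edge u c x = wedge_edge x c u.
Proof. by rewrite /wedge_edge setUC (setUC [set c]) (setUC [set u]). Qed.

Lemma wedgeP (T : finType) (e : rel T) P :
  reflect (exists u c x, [/\ e u c, e c x, ~~ e u x, u != x & P = wedge_edge u c x])
          (P \in wedge_edges e).
Proof.
rewrite inE; apply: (iffP existsP).
  by move=> [u /existsP[c /existsP[x /and5P[? ? ? ? /eqP ->]]]]; exists u, c, x.
move=> [u [c [x [? ? ? ? ->]]]]; exists u; apply/existsP; exists c.
by apply/existsP; exists x; apply/and5P; split.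
Qed.

Lemma eq_wedge_edges (T : finType) (e1 e2 : rel T) :
  e1 =2 e2 -> wedge_edges e1 = wedge_edges e2.
Proof.
move=> eq_e; apply/setP => P.
by apply/wedgeP/wedgeP => -[u [c [x wedge_ucx]]]; exists u, c, x;
  move: wedge_ucx; rewrite !eq_e.
Qed.

Section AddEdge.
Variables (T : finType) (e : rel T) (v w : T).
Hypotheses (sym_e : symmetric e) (neq_vw : v != w).

Local Notation N a := [set u | e a u].

Lemma add_edgeP x y : add_edge e v w x y ->
  e x y \/ (x = v /\ y = w) \/ (x = w /\ y = v).
Proof.
rewrite /add_edge => /orP[/orP[exy|/andP[/eqP-> /eqP->]]|/andP[/eqP-> /eqP->]];
by [left | right; left | right; right].
Qed.

Lemma add_edgeW x y : e x y -> add_edge e v w x y.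
Proof. by rewrite /add_edge => ->. Qed.

Lemma add_edge_new_wedges :
  wedge_edges (add_edge e v w) :\: wedge_edges e \subset
  [set wedge_edge w v x | x in N v] :|: [set wedge_edge v w x | x in N w].
Proof.
apply/subsetP => _ /setDP[/wedgeP[u [c [x [euc ecx nux neq_ux ->]]]] not_old].
have {}nux : ~~ e u x by apply: contra nux; apply: add_edgeW.
case/add_edgeP: euc => [euc | [[? ?] | [? ?]]].
- case/add_edgeP: ecx => [ecx | [[? ?] | [? ?]]]; subst.
  + by case/wedgeP: not_old; exists u, c, x.
  + by rewrite wedge_edgeC in_setU imset_f // inE sym_e.
  + by rewrite wedge_edgeC in_setU imset_f ?orbT // inE sym_e.
- subst; case/add_edgeP: ecx => [ewx | [[/eqP] | [_ xv]]].
  + by rewrite in_setU imset_f ?orbT // inE.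
  + by rewrite eq_sym (negbTE neq_vw).
  + by rewrite xv eqxx in neq_ux.
- subst; case/add_edgeP: ecx => [evx | [[_ xw] | [/eqP]]].
  + by rewrite in_setU imset_f // inE.
  + by rewrite xw eqxx in neq_ux.
  + by rewrite (negbTE neq_vw).
Qed.

Lemma add_edge_lost_wedges :
  wedge_edges e :\: wedge_edges (add_edge e v w) \subset
  [set wedge_edge v c w | c in N v :&: N w].
Proof.
apply/subsetP => _ /setDP[/wedgeP[u [c [x [euc ecx nux neq_ux ->]]]] not_new].
have: add_edge e v w u x.
  apply: contraNT not_new => nux'; apply/wedgeP; exists u, c, x.
  by split=> //; apply: add_edgeW.
case/add_edgeP => [eux | [[? ?] | [? ?]]]; subst.
- by rewrite eux in nux.
- by apply/imsetP; exists c; rewrite // !inE euc sym_e.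
- by rewrite wedge_edgeC; apply/imsetP; exists c; rewrite // !inE euc sym_e ecx.
Qed.

Lemma card_add_edge_new_wedges :
  #|wedge_edges (add_edge e v w) :\: wedge_edges e| <= deg e v + deg e w.
Proof.
apply: leq_trans (subset_leq_card add_edge_new_wedges) _.
apply: leq_trans (leq_card_setU _ _) _.
exact: leq_add (leq_imset_card _ _) (leq_imset_card _ _).
Qed.

Lemma card_add_edge_lost_wedges :
  #|wedge_edges e :\: wedge_edges (add_edge e v w)| <= minn (deg e v) (deg e w).
Proof.
apply: leq_trans (subset_leq_card add_edge_lost_wedges) _.
apply: leq_trans (leq_imset_card _ _) _.
by rewrite leq_min !subset_leq_card ?subsetIl ?subsetIr.
Qed.

End AddEdge.

Section DelEdge.
Variables (T : finType) (e : rel T) (v w : T).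

Lemma leq_deg_del_edge a : deg (del_edge e v w) a <= deg e a.
Proof. by apply/subset_leq_card/subsetP => u; rewrite !inE => /andP[]. Qed.

Hypothesis sym_e : symmetric e.

Lemma del_edge_sym : symmetric (del_edge e v w).
Proof.
move=> x y; rewrite /del_edge sym_e orbC.
by rewrite (andbC (y == v)) (andbC (y == w)).
Qed.

Lemma del_edgeK : e v w -> add_edge (del_edge e v w) v w =2 e.
Proof.
move=> evw x y; rewrite /add_edge /del_edge /= -orbA.
have [_ | nexy] /= := boolP (e x y); first by rewrite orNb.
apply/negbTE; apply: contra nexy => /orP[] /andP[/eqP-> /eqP->] //.
by rewrite sym_e.
Qed.

End DelEdge.

Theorem lemma2 (T : finType) (e : rel T) (v w : T) :
  simple_graph e -> v != w ->
  (~~ e v w ->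
     #|wedge_edges (add_edge e v w) :\: wedge_edges e| <= deg e v + deg e w /\
     #|wedge_edges e :\: wedge_edges (add_edge e v w)| <= minn (deg e v) (deg e w)) /\
  (e v w ->
     #|wedge_edges (del_edge e v w) :\: wedge_edges e| <= minn (deg e v) (deg e w) /\
     #|wedge_edges e :\: wedge_edges (del_edge e v w)| <= deg e v + deg e w).
Proof.
move=> [sym_e _] neq_vw; split=> [_ | evw].
  by split; [apply: card_add_edge_new_wedges | apply: card_add_edge_lost_wedges].
have sym_d := del_edge_sym v w sym_e.
have deg_le a : deg (del_edge e v w) a <= deg e a := leq_deg_del_edge e v w a.
rewrite -(eq_wedge_edges (del_edgeK sym_e evw)); split.
- apply: leq_trans (card_add_edge_lost_wedges v w sym_d) _.
  by rewrite leq_min !(leq_trans _ (deg_le _)) ?geq_minl ?geq_minr.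
- apply: leq_trans (card_add_edge_new_wedges sym_d neq_vw) _.
  exact: leq_add (deg_le v) (deg_le w).
Qed.
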